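(* Let $A$ be a finite alphabet, $M$ a finite monoid, $\alpha: A^*\to M$ a monoid morphism, $S=\alpha(A^+)$, and let $B$, $\beta$ and well-formed words be as defined in the context. There exists a map $\eta: A^* \to B^*$ such that: (1) for every $w \in A^*$, $\eta(w)$ is well-formed and $\alpha(w) = \beta(\eta(w))$; (2) for every language $K \subseteq B^*$ definable in $\mathrm{FO}^2(<)$, the language $\eta^{-1}(K) \subseteq A^*$ is definable in $\mathrm{FO}^2(<,+1)$.
   Context: $E(S)$ denotes the set of idempotents of $S$, and $\square$ is a fresh symbol not in $M$. The alphabet $B$ is $\{(e,s,f) \mid e,f \in E(S)\cup\{\square\},\ s \in M\}$. The monoid morphism $\beta: B^* \to M$ is defined on letters by $\beta((e,s,f)) = esf$, $\beta((\square,s,f)) = sf$, $\beta((e,s,\square)) = es$ and $\beta((\square,s,\square)) = s$ for $e,f\in E(S)$, $s \in M$. A word $u = (e_0,s_0,f_0)\cdots(e_n,s_n,f_n) \in B^*$ is well-formed if it is nonempty, $e_0 = f_n = \square$, and for all $i < n$, $f_i = e_{i+1} \in E(S)$. Words are logical structures whose domain is the set of positions, with unary letter predicates $P_a$, the order $<$ and the successor $+1$; $\mathrm{FO}^2(<)$ (resp. $\mathrm{FO}^2(<,+1)$) is the set of first-order formulas using the letter predicates and $<$ (resp. $<$ and $+1$) with only two reusable variable names; a language is definable if it is the set of words satisfying such a sentence. The map $\eta$ need not be a morphism. *)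

From mathcomp Require Import all_boot.
Set Implicit Arguments. Unset Strict Implicit. Unset Printing Implicit Defensive.

(* The two reusable variable names x (false) and y (true). *)
Definition var := bool.

Inductive fo2 (L : Type) : Type :=
  | FTrue
  | FLetter (a : L) (x : var)
  | FEq (x y : var)
  | FLt (x y : var)
  | FSucc (x y : var)
  | FNot (phi : fo2 L)
  | FAnd (phi psi : fo2 L)
  | FExists (x : var) (phi : fo2 L).

Arguments FTrue {L}.

Definition upd (v : var -> nat) (x : var) (i : nat) : var -> nat :=
  fun z => if z == x then i else v z.

Fixpoint sat (L : Type) (w : seq L) (v : var -> nat) (phi : fo2 L) : Prop :=
  match phi with
  | FTrue => True
  | FLetter a x => onth w (v x) = Some a
  | FEq x y => v x = v y
  | FLt x y => v x < v y
  | FSucc x y => v y = (v x).+1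
  | FNot p => ~ sat w v p
  | FAnd p q => sat w v p /\ sat w v q
  | FExists x p => exists i, i < size w /\ sat w (upd v x i) p
  end.

Fixpoint fv (L : Type) (phi : fo2 L) : seq var :=
  match phi with
  | FTrue => [::]
  | FLetter _ x => [:: x]
  | FEq x y | FLt x y | FSucc x y => [:: x; y]
  | FNot p => fv p
  | FAnd p q => fv p ++ fv q
  | FExists x p => filter (fun z => z != x) (fv p)
  end.

Definition sentence (L : Type) (phi : fo2 L) : Prop := fv phi = [::].

Fixpoint succ_free (L : Type) (phi : fo2 L) : Prop :=
  match phi with
  | FSucc _ _ => False
  | FNot p => succ_free p
  | FAnd p q => succ_free p /\ succ_free q
  | FExists _ p => succ_free p
  | _ => True
  end.

(* the language of a sentence (the valuation is irrelevant for sentences) *)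
Definition lang (L : Type) (phi : fo2 L) : seq L -> Prop :=
  fun w => sat w (fun _ => 0) phi.

Definition FO2_lt_definable (L : Type) (K : seq L -> Prop) : Prop :=
  exists phi : fo2 L, sentence phi /\ succ_free phi /\ forall w, K w <-> lang phi w.

Definition FO2_lt_succ_definable (L : Type) (K : seq L -> Prop) : Prop :=
  exists phi : fo2 L, sentence phi /\ forall w, K w <-> lang phi w.

Section Alphabet.
Variables (A M : finType) (mul : M -> M -> M) (one : M) (alpha : seq A -> M).

Definition inS (s : M) : Prop := exists w : seq A, w <> [::] /\ alpha w = s.

Definition inES (e : M) : Prop := inS e /\ mul e e = e.

(* letters (e,s,f); None stands for the fresh symbol \square *)
Definition Bvalid (x : option M * M * option M) : Prop :=
  (forall e, x.1.1 = Some e -> inES e) /\ (forall f, x.2 = Some f -> inES f).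

Definition Bty : Type := {x : option M * M * option M | Bvalid x}.

Definition beta_letter (b : Bty) : M :=
  match proj1_sig b with
  | (Some e, s, Some f) => mul (mul e s) f
  | (None, s, Some f) => mul s f
  | (Some e, s, None) => mul e s
  | (None, s, None) => s
  end.

Definition beta (u : seq Bty) : M := foldr (fun b m => mul (beta_letter b) m) one u.

Definition bdef : option M * M * option M := (None, one, None).

Definition well_formed (u : seq Bty) : Prop :=
  let t := map (@proj1_sig _ _) u in
  u <> [::] /\
  (nth bdef t 0).1.1 = None /\
  (nth bdef t (size t).-1).2 = None /\
  forall i, i.+1 < size t ->
    exists e, (nth bdef t i).2 = Some e /\ (nth bdef t i.+1).1.1 = Some e /\ inES e.

End Alphabet.

From mathcomp Require Import all_boot zify.
From Stdlib Require Import Classical ClassicalEpsilon.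
Set Implicit Arguments. Unset Strict Implicit. Unset Printing Implicit Defensive.

(* For a word w with n >= #|M| letters, cut w at positions
   0 = q_0 <= q_1 <= ... <= q_n = n and let letter i of eta w be
   (e_i, alpha w[q_i, q_(i+1)), e_(i+1)), where the idempotent e_j of S fixes
   alpha w[0, q_j) on the right; beta (eta w) then telescopes to alpha w.
   The pair (q_j, e_j) is found in a window of length #|M| near j: two prefixes
   of the window have the same image x, so x t = x for some t in S, and x is
   fixed by the idempotent power of t. Taking q_j least makes the cuts monotone,
   and letter i only depends on the letters of w at distance at most #|M| from i,
   so eta is a sliding block code on long words. Under such a code, a letter
   predicate of B becomes a finite disjunction over neighbourhoods, each
   described with two variables by walking along successors; the finitely many
   short words are listed explicitly. *)

Section Onth.
Variable T : Type.

Lemma onth_some (s : seq T) p a : onth s p = Some a -> p < size s.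
Proof. by rewrite -onthTE => ->. Qed.

Lemma onth_none (s : seq T) p : onth s p = None <-> size s <= p.
Proof. by rewrite -onthNE; case: onth. Qed.

Lemma onth_tnth n (u : n.-tuple T) (i : 'I_n) : onth u i = Some (tnth u i).
Proof. by rewrite onthE (nth_map (tnth u i)) ?size_tuple // -tnth_nth. Qed.

Lemma onth_mkseq (f : nat -> T) n i :
  onth (mkseq f n) i = if i < n then Some (f i) else None.
Proof.
rewrite onthE; case: ltnP => [lt_in|le_ni]; last by rewrite nth_default // size_map size_mkseq.
by rewrite (nth_map (f 0)) ?size_mkseq // nth_mkseq.
Qed.

End Onth.

Section Factors.
Variable T : Type.
Implicit Types (w : seq T) (a b c o e : nat).

Definition factor w a b : seq T := take (b - a) (drop a w).

Lemma size_factor w a b : size (factor w a b) = minn (b - a) (size w - a).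
Proof. by rewrite size_take_min size_drop. Qed.

Lemma factor0 w : factor w 0 (size w) = w.
Proof. by rewrite /factor drop0 subn0 take_size. Qed.

Lemma factor_cat w a b c : a <= b -> b <= c -> factor w a c = factor w a b ++ factor w b c.
Proof.
move=> le_ab le_bc; rewrite /factor.
have -> : c - a = (b - a) + (c - b) by lia.
by rewrite takeD drop_drop; congr (_ ++ take _ (drop _ _)); lia.
Qed.

Lemma factor_factor w o e a b :
  a <= b -> o + b <= e -> factor (factor w o e) a b = factor w (o + a) (o + b).
Proof.
move=> le_ab le_be; rewrite /factor.
have -> : e - o = (e - o - a) + a by lia.
rewrite -take_drop take_takel ?drop_drop; last lia.
by congr (take _ (drop _ _)); lia.
Qed.

Lemma onth_factor w a b t : onth (factor w a b) t = if t < b - a then onth w (a + t) else None.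
Proof.
rewrite !onthE /factor map_take map_drop; case: ltnP => [lt_t|le_t].
  by rewrite nth_take // nth_drop.
by rewrite nth_default // size_take_min; lia.
Qed.

End Factors.

(** * Two-variable logic *)

Lemma upd_same (v : var -> nat) x i : upd v x i x = i.
Proof. by rewrite /upd eqxx. Qed.

Lemma upd_other (v : var -> nat) x i : upd v (~~ x) i x = v x.
Proof. by rewrite /upd; case: x. Qed.

Section Syntax.
Variable L : Type.
Implicit Types (w : seq L) (v : var -> nat) (phi psi : fo2 L) (S : seq var).

Lemma sat_and w v phi psi :
  sat w v (FAnd phi psi) <-> sat w v phi /\ sat w v psi.
Proof. by []. Qed.

Lemma sat_not w v phi : sat w v (FNot phi) <-> ~ sat w v phi.
Proof. by []. Qed.

Lemma sat_exists w v x phi :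
  sat w v (FExists x phi) <-> exists i, i < size w /\ sat w (upd v x i) phi.
Proof. by []. Qed.

Lemma fv_exists x phi S :
  {subset fv phi <= x :: S} -> {subset fv (FExists x phi) <= S}.
Proof.
by move=> sub_phi y; rewrite /= mem_filter => /andP[ne_yx /sub_phi]; rewrite inE (negPf ne_yx).
Qed.

Lemma fv_exists_other x phi : {subset fv (FExists x phi) <= [:: ~~ x]}.
Proof. by apply: fv_exists => y _; rewrite !inE; case: x y => -[]. Qed.

Lemma fv_and phi psi S :
  {subset fv phi <= S} -> {subset fv psi <= S} -> {subset fv (FAnd phi psi) <= S}.
Proof. by move=> fv_phi fv_psi x; rewrite mem_cat => /orP[/fv_phi|/fv_psi]. Qed.

Lemma sentence_of_fv phi : {subset fv phi <= [::]} -> sentence phi.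
Proof. by rewrite /sentence; case: (fv phi) => // x s /(_ x (mem_head _ _)). Qed.

End Syntax.

Section FO2.
Variable A : finType.
Implicit Types (w : seq A) (v : var -> nat) (phi psi : fo2 A) (S : seq var).

Definition FFalse : fo2 A := FNot FTrue.
Definition FOr phi psi : fo2 A := FNot (FAnd (FNot phi) (FNot psi)).

Lemma sat_or w v phi psi : sat w v (FOr phi psi) <-> sat w v phi \/ sat w v psi.
Proof.
split=> [nor|[] sat_phi [] //]; apply: NNPP => /not_or_and [].
by move=> ? ?; apply: nor.
Qed.

Lemma sat_bigAnd (T : finType) (P : pred T) (g : T -> fo2 A) w v :
  sat w v (\big[@FAnd A/FTrue]_(i | P i) g i) <-> (forall i, P i -> sat w v (g i)).
Proof.
suff satP s : sat w v (\big[@FAnd A/FTrue]_(i <- s | P i) g i) <->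
    (forall i, i \in s -> P i -> sat w v (g i)).
  by rewrite satP; split=> H i; [apply: H; rewrite mem_index_enum | move=> _; apply: H].
elim: s => [|x s IH]; rewrite ?big_nil ?big_cons //.
case: ifP => Px; rewrite /= ?IH; split.
- by move=> [gx gs] i; rewrite inE => /predU1P [->|/gs].
- by move=> H; split=> [|i s_i]; apply: H; rewrite ?inE ?eqxx ?s_i ?orbT.
- by move=> gs i; rewrite inE => /predU1P [-> /[!Px]|/gs].
- by move=> H i s_i; apply: H; rewrite inE s_i orbT.
Qed.

Lemma sat_bigOr (T : finType) (P : pred T) (g : T -> fo2 A) w v :
  sat w v (\big[FOr/FFalse]_(i | P i) g i) <-> exists2 i, P i & sat w v (g i).
Proof.
suff satP s : sat w v (\big[FOr/FFalse]_(i <- s | P i) g i) <->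
    exists2 i, (i \in s) && P i & sat w v (g i).
  by rewrite satP; split=> -[i]; [case/andP|]; exists i; rewrite ?mem_index_enum.
elim: s => [|x s IH]; rewrite ?big_nil ?big_cons.
  by split=> [/(_ I)|[]].
case: ifP => Px; rewrite ?sat_or IH; split.
- by case=> [gx|[i /andP[s_i Pi] gi]]; [exists x|exists i]; rewrite ?inE ?eqxx ?s_i ?Px ?orbT.
- case=> i /andP[]; rewrite inE => /predU1P [-> _|s_i Pi] gi; [left|right] => //.
  by exists i; rewrite ?s_i.
- by case=> i /andP[s_i Pi] gi; exists i; rewrite ?inE ?s_i ?Pi ?orbT.
- case=> i /andP[]; rewrite inE => /predU1P [-> /[!Px] //|s_i Pi] gi.
  by exists i; rewrite ?s_i.
Qed.

Lemma fv_bigAnd (T : finType) (P : pred T) (g : T -> fo2 A) S :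
  (forall i, P i -> {subset fv (g i) <= S}) -> {subset fv (\big[@FAnd A/FTrue]_(i | P i) g i) <= S}.
Proof.
by move=> fv_g; apply: (big_ind (fun f => {subset fv f <= S})) => // p q /fv_and; apply.
Qed.

Lemma fv_bigOr (T : finType) (P : pred T) (g : T -> fo2 A) S :
  (forall i, P i -> {subset fv (g i) <= S}) -> {subset fv (\big[FOr/FFalse]_(i | P i) g i) <= S}.
Proof.
by move=> fv_g; apply: (big_ind (fun f => {subset fv f <= S})) => // p q /fv_and; apply.
Qed.

Definition FStep (right : bool) (x y : var) : fo2 A := if right then FSucc A x y else FSucc A y x.

(* Walking [d] successor steps away from [z] only needs two variable names,
   used alternately. *)
Fixpoint FJump (right : bool) (z : var) (d : nat) (P : var -> fo2 A) : fo2 A :=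
  if d is d'.+1 then FExists (~~ z) (FAnd (FStep right z (~~ z)) (FJump right (~~ z) d' P))
  else P z.

Section Jump.
Variables (w : seq A) (P : var -> fo2 A) (Q : nat -> Prop).
Hypothesis satP : forall v y, sat w v (P y) <-> Q (v y).

Lemma sat_jump_right d v z : v z < size w ->
  sat w v (FJump true z d P) <-> v z + d < size w /\ Q (v z + d).
Proof.
elim: d v z => [|d IH] v z lt_z /=; first by rewrite satP addn0; split=> [|[]].
split=> [[i [lt_i [step]]]|[lt_zd Qzd]].
  rewrite upd_same upd_other in step; rewrite IH upd_same ?step ?addSnnS //; lia.
exists (v z).+1; split; first lia.
by rewrite /= upd_same upd_other; split=> //; rewrite IH upd_same ?addSnnS //; lia.
Qed.

Lemma sat_jump_left d v z : v z < size w ->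
  sat w v (FJump false z d P) <-> d <= v z /\ Q (v z - d).
Proof.
elim: d v z => [|d IH] v z lt_z /=; first by rewrite satP subn0; split=> [|[]].
split=> [[i [lt_i [step]]]|[le_dz Qzd]].
  rewrite upd_same upd_other in step; rewrite IH upd_same // step subSS.
  by case=> le_di Qid; split; first lia.
exists (v z).-1; split; first lia.
rewrite /= upd_same upd_other; split; first lia.
rewrite IH upd_same; last lia.
have -> : (v z).-1 - d = v z - d.+1 by lia.
by split; first lia.
Qed.

End Jump.

Lemma fv_jump right d z (P : var -> fo2 A) :
  (forall y, {subset fv (P y) <= [:: y]}) -> {subset fv (FJump right z d P) <= [:: z]}.
Proof. by case: d => [|d] fv_P; [apply: fv_P|rewrite -{2}(negbK z); apply: fv_exists_other]. Qed.

Local Notation definable := (@FO2_lt_succ_definable A).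

Lemma definable_ext (K K' : seq A -> Prop) :
  (forall w, K w <-> K' w) -> definable K -> definable K'.
Proof. by move=> eqK [phi [s_phi def_phi]]; exists phi; split=> // w; rewrite -eqK. Qed.

Lemma definable_or (K K' : seq A -> Prop) :
  definable K -> definable K' -> definable (fun w => K w \/ K' w).
Proof.
move=> [phi [s_phi def_phi]] [psi [s_psi def_psi]]; exists (FOr phi psi).
by split=> [|w]; rewrite /sentence /= ?s_phi ?s_psi // def_phi def_psi /lang sat_or.
Qed.

Lemma definable_and (K K' : seq A -> Prop) :
  definable K -> definable K' -> definable (fun w => K w /\ K' w).
Proof.
move=> [phi [s_phi def_phi]] [psi [s_psi def_psi]]; exists (FAnd phi psi).
by split=> [|w]; rewrite /sentence /= ?s_phi ?s_psi // def_phi def_psi.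
Qed.

Definition FIn z : fo2 A := FExists (~~ z) (FEq A z (~~ z)).

Lemma sat_in w v z : sat w v (FIn z) <-> v z < size w.
Proof.
split=> [[i [lt_i]]|lt_z]; first by rewrite /= upd_same upd_other => ->.
by exists (v z); rewrite /= upd_same upd_other.
Qed.

Lemma fv_in z : {subset fv (FIn z) <= [:: z]}.
Proof. by rewrite -{2}(negbK z); apply: fv_exists_other. Qed.

Definition FFirst z : fo2 A := FNot (FExists (~~ z) (FStep true (~~ z) z)).

Lemma fv_first z : {subset fv (FFirst z) <= [:: z]}.
Proof. by case: z => x; rewrite /= !inE; case: x. Qed.

Definition FAt (t : nat) (P : var -> fo2 A) : fo2 A :=
  FExists false (FAnd (FFirst false) (FJump true false t P)).

Lemma sat_at (P : var -> fo2 A) (Q : nat -> Prop) w :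
  (forall v y, sat w v (P y) <-> Q (v y)) ->
  forall t v, sat w v (FAt t P) <-> t < size w /\ Q t.
Proof.
move=> satP t v; rewrite sat_exists; split=> [[i [lt_i /sat_and [first_i jump_i]]]|[lt_t Qt]].
  have i0 : i = 0.
    case: i {jump_i} lt_i first_i => // i lt_i []; exists i; split; first lia.
    by rewrite /upd.
  by move: jump_i; rewrite (sat_jump_right satP) upd_same i0 // -i0.
exists 0; split; first lia; split.
  by case=> j [_]; rewrite /upd.
by rewrite (sat_jump_right satP) upd_same //; lia.
Qed.

Lemma sat_at_true w t v : sat w v (FAt t (fun _ => FTrue)) <-> t < size w.
Proof. by rewrite (@sat_at _ (fun _ => True)) //; split=> [[]|]. Qed.

Lemma fv_at t (P : var -> fo2 A) :
  (forall y, {subset fv (P y) <= [:: y]}) -> {subset fv (FAt t P) <= [::]}.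
Proof.
by move=> fv_P; apply/fv_exists/fv_and; [apply: fv_first|apply: fv_jump].
Qed.

Lemma definable_long N : definable (fun w => N <= size w).
Proof.
case: N => [|N]; first by exists FTrue; split.
exists (FAt N (fun _ => FTrue)); split; first exact/sentence_of_fv/fv_at.
by move=> w; rewrite /lang sat_at_true.
Qed.

(* Stated with an explicit predicate so that it instantiates the hypothesis
   of [sat_at] and [sat_jump_right]. *)
Lemma sat_letter w (a : A) v y : sat w v (FLetter a y) <-> (fun p => onth w p = Some a) (v y).
Proof. by []. Qed.

Definition FExact n (u : n.-tuple A) : fo2 A :=
  FAnd (\big[@FAnd A/FTrue]_(t < n) FAt t (FLetter (tnth u t))) (FNot (FAt n (fun _ => FTrue))).

Lemma sat_exact n (u : n.-tuple A) w v : sat w v (FExact u) <-> w = u.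
Proof.
rewrite sat_and sat_bigAnd sat_not sat_at_true; split=> [[letters short]|->].
  apply: eq_from_onth => p; case: (ltnP p n) => [lt_pn|le_np].
    have /(sat_at (sat_letter w _)) [_ ->] := letters (Ordinal lt_pn) isT.
    by rewrite (onth_tnth u (Ordinal lt_pn)).
  rewrite !onth_default ?size_tuple //.
  by apply: leq_trans le_np; rewrite leqNgt; apply/negP.
split=> [t _|]; last by rewrite size_tuple ltnn.
by apply/(sat_at (sat_letter _ _)); rewrite size_tuple onth_tnth.
Qed.

Lemma fv_exact n (u : n.-tuple A) : {subset fv (FExact u) <= [::]}.
Proof.
by apply: fv_and; [apply: fv_bigAnd => t _|]; apply: fv_at => y z.
Qed.

Lemma definable_short N (K : seq A -> Prop) : definable (fun w => size w < N /\ K w).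
Proof.
exists (\big[FOr/FFalse]_(n < N)
    \big[FOr/FFalse]_(u : n.-tuple A | excluded_middle_informative (K u)) FExact u).
split=> [|w].
  by apply: sentence_of_fv; do 2 apply: fv_bigOr => ? _; apply: fv_exact.
rewrite /lang sat_bigOr; split=> [[lt_wN Kw]|[n _ /sat_bigOr [u /sumboolP Ku /sat_exact ->]]].
  exists (Ordinal lt_wN) => //; apply/sat_bigOr.
  by exists (in_tuple w); [apply/sumboolP|apply/sat_exact].
by rewrite size_tuple.
Qed.

(** * Sliding block codes *)

Section Views.
Variable r : nat.

(* [view r w i] lists the letters of [w] at positions [i - r], ..., [i + r],
   with [None] outside [w]. *)
Definition entry w i k : option A :=
  if r <= k then onth w (i + (k - r))
  else if r - k <= i then onth w (i - (r - k)) else None.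

Definition view w i : seq (option A) := mkseq (entry w i) r.*2.+1.

Lemma entryE w i k : entry w i k = if r <= i + k then onth w (i + k - r) else None.
Proof.
rewrite /entry; case: (leqP r k) => [le_rk|lt_kr]; first by rewrite ifT; [congr onth|]; lia.
case: leqP => [le_rki|lt_ikr]; first by rewrite ifT; [congr onth|]; lia.
by rewrite ifF //; apply/negbTE; rewrite -ltnNge; lia.
Qed.

Lemma view_split w i : i < size w ->
  view w i = nseq (r - i) None ++ map Some (factor w (i - r) (i + r.+1)) ++
             nseq (i + r.+1 - size w) None.
Proof.
move=> lt_iw; apply: (@eq_from_nth _ None) => [|k].
  by rewrite size_mkseq !size_cat !size_nseq size_map size_factor; lia.
rewrite size_mkseq => lt_k; rewrite nth_mkseq // entryE nth_cat size_nseq nth_nseq.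
rewrite nth_cat size_map nth_nseq -onthE onth_factor size_factor.
case: (ltnP k (r - i)) => [lt_kr|le_rk]; first by rewrite leqNgt; case: ltnP => //; lia.
have -> : r <= i + k by lia.
case: ltnP => [lt_kw|le_wk]; first by rewrite ifT; [congr onth|]; lia.
by rewrite if_same onth_default //; lia.
Qed.

Lemma pmap_view w i : i < size w -> pmap id (view w i) = factor w (i - r) (i + r.+1).
Proof.
have pmap_none n : pmap id (nseq n (@None A)) = [::] by elim: n.
by move=> lt_iw; rewrite view_split // !pmap_cat !pmap_none cats0 (map_pK (g := Some) (f := id)).
Qed.

Lemma find_view w i : i < size w -> find isSome (view w i) = r - i.
Proof.
move=> lt_iw; rewrite view_split // find_cat has_nseq andbF size_nseq.
have : 0 < size (factor w (i - r) (i + r.+1)) by rewrite size_factor; lia.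
by case: factor => // x s _; rewrite addn0.
Qed.

Definition FOption (c : option A) : var -> fo2 A :=
  if c is Some a then FLetter a else fun _ => FTrue.

Definition FEntry (c : option A) k z : fo2 A :=
  let J := if r <= k then FJump true z (k - r) (FOption c) else FJump false z (r - k) (FOption c) in
  if c is Some _ then J else FNot J.

Lemma sat_entry c k w v z : v z < size w -> sat w v (FEntry c k z) <-> entry w (v z) k = c.
Proof.
move=> lt_z; rewrite /FEntry /entry; case: c => [a|] /=; case: leqP => le_rk.
- rewrite (sat_jump_right (sat_letter w a)) //.
  by split=> [[]//|onth_a]; rewrite (onth_some onth_a).
- rewrite (sat_jump_left (sat_letter w a)) //.
  by case: ifP => le_kz; split=> [[]|] //; rewrite le_kz.
- rewrite (@sat_jump_right _ _ (fun _ => True)) // onth_none.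
  by split=> [not_lt|le_w [lt_w _]]; [rewrite leqNgt; apply/negP => ?; apply: not_lt|lia].
- rewrite (@sat_jump_left _ _ (fun _ => True)) //.
  case: ifP => le_kz; last by split=> // _ [].
  by split=> [[]|/onth_none]; last lia.
Qed.

Lemma fv_entry c k z : {subset fv (FEntry c k z) <= [:: z]}.
Proof.
have fv_c y : {subset fv (FOption c y) <= [:: y]} by case: c => [a x|x] //=.
by rewrite /FEntry; case: c fv_c => [a|] fv_c; case: leqP => _; apply: fv_jump.
Qed.

Definition FView (c : seq (option A)) z : fo2 A :=
  \big[@FAnd A/FTrue]_(k < r.*2.+1) FEntry (nth None c k) k z.

Lemma sat_view c w v z : size c = r.*2.+1 -> v z < size w ->
  sat w v (FView c z) <-> view w (v z) = c.
Proof.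
move=> size_c lt_z; rewrite sat_bigAnd; split=> [entries|<- k _].
  apply: (@eq_from_nth _ None); rewrite size_mkseq ?size_c // => k lt_k.
  by rewrite nth_mkseq //; apply/(sat_entry _ _ lt_z)/(entries (Ordinal lt_k)).
by apply/sat_entry; rewrite // nth_mkseq.
Qed.

Lemma fv_view c z : {subset fv (FView c z) <= [:: z]}.
Proof. by apply: fv_bigAnd => k _; apply: fv_entry. Qed.

End Views.

Section SlidingBlockCode.
Variables (r : nat) (B : Type) (F : seq (option A) -> B).

Definition slide w : seq B := mkseq (fun i => F (view r w i)) (size w).

Definition FLetterOf (b : B) z : fo2 A :=
  FAnd (FIn z) (\big[FOr/FFalse]_(c : r.*2.+1.-tuple (option A) |
                  excluded_middle_informative (F c = b)) FView r c z).

Lemma sat_letter_of b w v z :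
  sat w v (FLetterOf b z) <-> v z < size w /\ F (view r w (v z)) = b.
Proof.
rewrite sat_and sat_in sat_bigOr.
split=> [[lt_z [c /sumboolP Fc /sat_view]]|[lt_z Fb]].
  by rewrite size_tuple => /(_ erefl lt_z) view_c; rewrite view_c.
have size_view : size (view r w (v z)) == r.*2.+1 by rewrite size_mkseq.
by split=> //; exists (Tuple size_view); [apply/sumboolP|apply/sat_view; rewrite ?size_mkseq].
Qed.

Lemma fv_letter_of b z : {subset fv (FLetterOf b z) <= [:: z]}.
Proof. by apply: fv_and; [apply: fv_in|apply: fv_bigOr => c _; apply: fv_view]. Qed.

Fixpoint translate (phi : fo2 B) : fo2 A :=
  match phi with
  | FTrue => FTrue
  | FLetter b x => FLetterOf b x
  | FEq x y => FEq A x y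
  | FLt x y => FLt A x y
  | FSucc x y => FSucc A x y
  | FNot phi => FNot (translate phi)
  | FAnd phi psi => FAnd (translate phi) (translate psi)
  | FExists x phi => FExists x (translate phi)
  end.

Lemma sat_translate w (phi : fo2 B) v : sat (slide w) v phi <-> sat w v (translate phi).
Proof.
elim: phi v => // [b x|phi IH|phi IHphi psi IHpsi|x phi IH] v; rewrite [translate _]/=.
- rewrite sat_letter_of -[sat _ _ _]/(onth _ _ = _) onth_mkseq.
  by case: ltnP => _; [split=> [[<-]|[_ ->]]|split=> // -[]].
- by rewrite sat_not IH.
- by rewrite sat_and IHphi IHpsi.
- by rewrite !sat_exists size_mkseq; split=> -[i [lt_i /IH sat_i]]; exists i.
Qed.

Lemma fv_translate (phi : fo2 B) : {subset fv (translate phi) <= fv phi}.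
Proof.
elim: phi => [|b x|x y|x y|x y|phi IH|phi IHphi psi IHpsi|x phi IH] //=.
- exact: fv_letter_of.
- by move=> y; rewrite !mem_cat => /orP[/IHphi|/IHpsi] ->; rewrite ?orbT.
- by move=> y; rewrite !mem_filter => /andP[-> /IH].
Qed.

Lemma definable_slide (K : seq B -> Prop) :
  FO2_lt_succ_definable K -> definable (fun w => K (slide w)).
Proof.
move=> [phi [s_phi def_phi]]; exists (translate phi); split=> [|w].
  by apply: sentence_of_fv => x /fv_translate; rewrite s_phi.
by rewrite def_phi /lang sat_translate.
Qed.

Lemma definable_preimage_slide (f : seq A -> seq B) N (K : seq B -> Prop) :
  (forall w, N <= size w -> f w = slide w) ->
  FO2_lt_succ_definable K -> definable (fun w => K (f w)).
Proof.
move=> f_slide def_K; apply: (@definable_ext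
  (fun w => (N <= size w /\ K (slide w)) \/ (size w < N /\ K (f w)))).
  move=> w; case: leqP => [le_Nw|lt_wN].
    by rewrite f_slide //; split=> [[[]|[]]|] //; left.
  by split=> [[[]|[]]|] //; right.
by apply: definable_or; [apply: definable_and; [apply: definable_long|apply: definable_slide]|
  apply: definable_short].
Qed.

End SlidingBlockCode.

End FO2.

(** * The factorization of a word *)

Section Construction.
Variables (A M : finType) (mul : M -> M -> M) (one : M).
Hypotheses (mulA : associative mul) (mul1m : left_id one mul) (mulm1 : right_id one mul).
Variable alpha : seq A -> M.
Hypotheses (alpha_nil : alpha [::] = one)
  (alpha_cat : forall u v, alpha (u ++ v) = mul (alpha u) (alpha v)).

Local Notation inS := (inS alpha).
Local Notation inES := (inES mul alpha).
Local Notation Bvalid := (Bvalid mul alpha).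
Local Notation B := (Bty mul alpha).

Lemma card_M_gt0 : 0 < #|M|.
Proof. by apply/card_gt0P; exists one. Qed.

Lemma pigeonhole (f : nat -> M) : exists i j, i < j <= #|M| /\ f i = f j.
Proof.
have /injectivePn [i [j ne_ij f_ij]] : ~~ injectiveb (fun k : 'I_#|M|.+1 => f k).
  by apply/injectiveP => /leq_card; rewrite card_ord ltnn.
case: (ltngtP i j) => [lt_ij|lt_ji|/val_inj eq_ij]; last by rewrite eq_ij eqxx in ne_ij.
  by exists i, j; rewrite lt_ij -ltnS ltn_ord.
by exists j, i; rewrite lt_ji -ltnS ltn_ord.
Qed.

Definition mpow (t : M) n := iter n (mul t) one.

Lemma mpowD t m n : mpow t (m + n) = mul (mpow t m) (mpow t n).
Proof. by elim: m => [|m IH]; rewrite ?mul1m // addSn /mpow !iterS -/(mpow t _) IH mulA. Qed.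

(* [t^(i+1) = t^(j+1)] makes the powers beyond [i] periodic of period [j - i]. *)
Lemma idempotent_mpow t : exists2 N, 0 < N & mul (mpow t N) (mpow t N) = mpow t N.
Proof.
have [i [j [/andP[lt_ij _] eq_ij]]] := pigeonhole (fun n => mpow t n.+1).
have step m : i.+1 <= m -> mpow t (m + (j - i)) = mpow t m.
  by move=> le_im; rewrite (_ : m + _ = m - i.+1 + j.+1) ?mpowD -?eq_ij -?mpowD ?subnK //; lia.
have period q m : i.+1 <= m -> mpow t (m + q * (j - i)) = mpow t m.
  move=> le_im; elim: q => [|q IH]; first by rewrite addn0.
  by rewrite mulSnr addnA step ?IH //; lia.
exists (i.+1 * (j - i)); first by rewrite muln_gt0 subn_gt0 lt_ij.
by rewrite -mpowD period // leq_pmulr // subn_gt0.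
Qed.

Lemma alpha_flatten_nseq u n : alpha (flatten (nseq n u)) = mpow (alpha u) n.
Proof. by elim: n => [|n IH] //=; rewrite alpha_cat IH. Qed.

Lemma fixed_by_idempotent x t : inS t -> mul x t = x -> exists2 e, inES e & mul x e = x.
Proof.
case=> u [nz_u <-] fix_x; have [N N_gt0 idem] := idempotent_mpow (alpha u).
exists (mpow (alpha u) N).
  split=> //; exists (flatten (nseq N u)); split; last exact: alpha_flatten_nseq.
  by case: N N_gt0 {idem} => // N _; case: (u) nz_u.
by elim: N {N_gt0 idem} => [|N IH]; rewrite ?mulm1 // /mpow iterS -/(mpow _ N) mulA fix_x.
Qed.

(* A local certificate that [e] fixes the image of every word ending with
   [factor u l m], see [prefix_fixed]. *)
Definition anchor (u : seq A) (m : nat) (e : M) : bool :=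
  excluded_middle_informative (inES e) &&
  has (fun l => mul (alpha (factor u l m)) e == alpha (factor u l m)) (iota 0 m.+1).

Lemma anchorP u m e :
  reflect (inES e /\ exists2 l, l <= m & mul (alpha (factor u l m)) e = alpha (factor u l m))
          (anchor u m e).
Proof.
apply: (iffP andP) => [[/sumboolP ES /hasP [l]]|[ES [l le_lm /eqP fix_l]]].
  by rewrite mem_iota => /andP[_ le_lm] /eqP; split=> //; exists l.
by split; [apply/sumboolP|apply/hasP; exists l; rewrite ?mem_iota].
Qed.

Lemma anchor_exists u : #|M| <= size u -> has (fun m => [exists e, anchor u m e]) (iota 0 #|M|.+1).
Proof.
move=> long_u.
have [i [j [/andP[lt_ij le_jM] eq_ij]]] := pigeonhole (fun m => alpha (factor u 0 m)).
have inS_t : inS (alpha (factor u i j)).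
  by exists (factor u i j); split=> // /(congr1 size); rewrite size_factor /=; lia.
have fix_t : mul (alpha (factor u 0 i)) (alpha (factor u i j)) = alpha (factor u 0 i).
  by rewrite -alpha_cat -factor_cat ?eq_ij // ltnW.
have [e ES fix_e] := fixed_by_idempotent inS_t fix_t.
apply/hasP; exists i; first by rewrite mem_iota; lia.
by apply/existsP; exists e; apply/anchorP; split=> //; exists 0.
Qed.

(* Taking the least anchored position makes cut points monotone, see [cut_mono]. *)
Definition cut (u : seq A) : nat := find (fun m => [exists e, anchor u m e]) (iota 0 #|M|.+1).

Definition cut_idem (u : seq A) : M := odflt one [pick e | anchor u (cut u) e].

Lemma cut_spec u : #|M| <= size u -> cut u <= #|M| /\ anchor u (cut u) (cut_idem u).
Proof.
move=> /anchor_exists ex_anchor; have := ex_anchor; rewrite has_find size_iota ltnS => ->.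
have := nth_find 0 ex_anchor; rewrite -/(cut u) nth_iota ?add0n; last first.
  by rewrite -(size_iota 0 #|M|.+1) -has_find.
by rewrite /cut_idem => /existsP [e]; case: pickP => [e' ->|/(_ e) ->].
Qed.

Lemma cut_min u m e : m < cut u -> ~~ anchor u m e.
Proof.
move=> lt_m; have lt_mM : m < #|M|.+1.
  by apply: leq_trans lt_m _; rewrite -(size_iota 0 #|M|.+1) find_size.
by have := before_find 0 lt_m; rewrite nth_iota // add0n => /negbT /existsPn.
Qed.

(* By truncated subtraction, the window of [j] is [factor w (j - #|M|) j] if
   [#|M| <= j] and [factor w 0 #|M|] otherwise. *)
Definition window (w : seq A) j : seq A := factor w (j - #|M|) (j - #|M| + #|M|).

Definition cutpos (w : seq A) j : nat :=
  if j == 0 then 0 else if j == size w then j else j - #|M| + cut (window w j).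

Definition idem_at (w : seq A) j : option M :=
  if (j == 0) || (j == size w) then None else Some (cut_idem (window w j)).

Definition triple (w : seq A) i : option M * M * option M :=
  (idem_at w i, alpha (factor w (cutpos w i) (cutpos w i.+1)), idem_at w i.+1).

Lemma Bvalid_square s : Bvalid (None, s, None).
Proof. by split. Qed.

(* Invalid triples do not occur in [eta]; they are sent to an arbitrary letter. *)
Definition mkB (x : option M * M * option M) : B :=
  match excluded_middle_informative (Bvalid x) with
  | left valid_x => exist _ x valid_x
  | right _ => exist _ (None, one, None) (Bvalid_square one)
  end.

Lemma mkB_val x : Bvalid x -> proj1_sig (mkB x) = x.
Proof. by rewrite /mkB; case: excluded_middle_informative. Qed.

Definition letter (w : seq A) i : B := mkB (triple w i).

Definition eta (w : seq A) : seq B :=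
  if #|M| <= size w then mkseq (letter w) (size w) else [:: mkB (None, alpha w, None)].

Definition oact (o : option M) (x : M) : M := if o is Some e then mul x e else x.

Lemma cut_mono (w : seq A) D D' : D <= D' -> D' + #|M| <= size w ->
  D + cut (factor w D (D + #|M|)) <= D' + cut (factor w D' (D' + #|M|)).
Proof.
set u := factor w D _; set u' := factor w D' _ => le_DD' le_D'w.
have [size_u size_u'] : #|M| <= size u /\ #|M| <= size u' by rewrite !size_factor; lia.
have [[le_cut _] [le_cut' /anchorP [ES [l le_l fix_l]]]] := (cut_spec size_u, cut_spec size_u').
rewrite leqNgt; apply/negP => lt_cut.
have /negP[] := @cut_min u (D' - D + cut u') (cut_idem u') ltac:(lia).
apply/anchorP; split=> //; exists (D' - D + l); first lia.
have fac_u' : factor u' l (cut u') = factor w (D' + l) (D' + cut u').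
  by rewrite factor_factor //; lia.
have fac_u : factor u (D' - D + l) (D' - D + cut u') = factor w (D' + l) (D' + cut u').
  by rewrite factor_factor; [congr factor|..]; lia.
by rewrite fac_u -fac_u'.
Qed.

Lemma beta_cat (u u' : seq B) : beta one (u ++ u') = mul (beta one u) (beta one u').
Proof. by elim: u => [|b u IH] /=; rewrite ?mul1m // IH mulA. Qed.

Lemma mul_beta_letter x (P : M) : Bvalid x -> oact x.1.1 P = P ->
  mul P (beta_letter (mkB x)) = oact x.2 (mul P x.1.2).
Proof.
case: x => [[o s] o'] valid_x; rewrite /beta_letter mkB_val {valid_x} //=.
by case: o => [e|] /= fix_e; case: o' => [f|] //=; rewrite ?mulA ?fix_e.
Qed.

Section LongWord.
Variable w : seq A.
Hypothesis long_w : #|M| <= size w.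

Lemma window_spec j : j <= size w ->
  cut (window w j) <= #|M| /\ anchor (window w j) (cut (window w j)) (cut_idem (window w j)).
Proof. by move=> le_jw; apply: cut_spec; rewrite size_factor; lia. Qed.

Lemma idem_at_inES j e : j <= size w -> idem_at w j = Some e -> inES e.
Proof.
rewrite /idem_at; case: ifP => // _ le_jw [<-].
by have [_ /anchorP []] := window_spec le_jw.
Qed.

Lemma triple_valid i : i < size w -> Bvalid (triple w i).
Proof. by move=> lt_iw; split=> e /idem_at_inES; apply; lia. Qed.

Lemma cutpos_le j : j <= size w -> cutpos w j <= j - #|M| + #|M|.
Proof.
rewrite /cutpos => le_jw; case: eqP => // _; case: eqP => [_|_]; first lia.
by have [le_cut _] := window_spec le_jw; lia.
Qed.

Lemma cutpos_mono j : j < size w -> cutpos w j <= cutpos w j.+1.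
Proof.
move=> lt_jw; have le_j := cutpos_le (ltnW lt_jw); rewrite [cutpos w j.+1]/cutpos /=.
case: (j.+1 =P size w) => [eq_jw|ne_jw]; first lia.
rewrite /cutpos; case: eqP => // nz_j; rewrite ltn_eqF //.
by apply: (@cut_mono w (j - #|M|) (j.+1 - #|M|)); lia.
Qed.

Lemma prefix_fixed j : j <= size w ->
  oact (idem_at w j) (alpha (factor w 0 (cutpos w j))) = alpha (factor w 0 (cutpos w j)).
Proof.
rewrite /idem_at /cutpos; case: ifP => //= /norP[/negPf-> /negPf->] le_jw.
have [le_cut /anchorP [_ [l le_l fix_l]]] := window_spec le_jw.
have fac_l : factor (window w j) l (cut (window w j)) =
             factor w (j - #|M| + l) (j - #|M| + cut (window w j)).
  by rewrite factor_factor //; lia.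
rewrite fac_l in fix_l.
by rewrite (@factor_cat _ w 0 (j - #|M| + l)) ?alpha_cat -?mulA ?fix_l ?leq_add2l.
Qed.

Lemma beta_prefix m : m <= size w ->
  beta one (mkseq (letter w) m) = alpha (factor w 0 (cutpos w m)).
Proof.
elim: m => [_|m IH lt_mw]; first by rewrite /factor take0.
rewrite mkseqS -cats1 beta_cat IH 1?ltnW //= mulm1 mul_beta_letter /=;
  [|exact: triple_valid|exact/prefix_fixed/ltnW].
by rewrite -alpha_cat -factor_cat ?cutpos_mono // prefix_fixed.
Qed.

End LongWord.

Lemma beta_eta w : beta one (eta w) = alpha w.
Proof.
rewrite /eta; case: leqP => [long_w|_]; last by rewrite /= mulm1 /beta_letter mkB_val.
rewrite beta_prefix // /cutpos eqxx /=.
by case: eqP => [/size0nil -> //|_]; rewrite factor0.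
Qed.

Lemma well_formed_eta w : well_formed one (eta w).
Proof.
rewrite /eta /well_formed; case: leqP => [long_w|_]; last by rewrite /= mkB_val.
have nth_eta i : i < size w ->
    nth (bdef one) (map (@proj1_sig _ _) (mkseq (letter w) (size w))) i = triple w i.
  move=> lt_iw; rewrite (nth_map (letter w 0)) ?size_mkseq // nth_mkseq // mkB_val //.
  exact: triple_valid.
have size_gt0 : 0 < size w by apply: leq_trans card_M_gt0 long_w.
rewrite size_map size_mkseq !nth_eta; try lia.
split; first by move=> /(congr1 size); rewrite size_mkseq /=; lia.
split; first by rewrite /triple /idem_at eqxx.
split; first by rewrite /triple /idem_at prednK // eqxx orbT.
move=> i lt_iw; rewrite !nth_eta; try lia.
exists (cut_idem (window w i.+1)); rewrite /triple /idem_at /= (ltn_eqF lt_iw).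
do 2!split=> //; apply: (@idem_at_inES w long_w i.+1); first exact: ltnW.
by rewrite /idem_at /= (ltn_eqF lt_iw).
Qed.

(* Decodes [view #|M| w i]: [pmap id] recovers the factor of [w] around [i],
   and the leading [None]s the offset of [i] in it. *)
Definition letter_of_view (c : seq (option A)) : B := letter (pmap id c) (#|M| - find isSome c).

Section Window.
Variables (w : seq A) (i : nat).
Hypotheses (long_w : #|M| <= size w) (lt_iw : i < size w).
Let o := i - #|M|.
Let v := factor w o (i + #|M|.+1).

Lemma cutpos_factor j : i <= j <= i.+1 ->
  [/\ o <= cutpos w j, cutpos w j <= i + #|M|.+1,
      cutpos v (j - o) = cutpos w j - o & idem_at v (j - o) = idem_at w j].
Proof.
case/andP=> le_ij le_ji; have le_jw : j <= size w by lia.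
have K_gt0 := card_M_gt0.
have eq0 : (j - o == 0) = (j == 0) by apply/eqP/eqP; rewrite /o; lia.
have eqn : (j - o == size v) = (j == size w) by rewrite size_factor; apply/eqP/eqP; rewrite /o; lia.
have win : window v (j - o) = window w j.
  by rewrite /window factor_factor; [congr factor|..]; rewrite /o; lia.
have := cutpos_le long_w le_jw; rewrite /cutpos /idem_at eq0 eqn win /o.
by case: eqP => [j0|nz_j]; case: eqP => [jw|ne_jw]; split=> //; lia.
Qed.

Lemma letter_factor : letter v (i - o) = letter w i.
Proof.
have [o_i c_i cut_i idem_i] := @cutpos_factor i ltac:(lia).
have [o_i1 c_i1 cut_i1 idem_i1] := @cutpos_factor i.+1 ltac:(lia).
have mono := cutpos_mono long_w lt_iw.
rewrite /letter /triple -subSn ?cut_i ?cut_i1 ?idem_i ?idem_i1 /o; last lia.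
by rewrite factor_factor ?subnKC //; lia.
Qed.

Lemma letter_of_view_view : letter_of_view (view #|M| w i) = letter w i.
Proof.
rewrite /letter_of_view pmap_view // find_view //.
by rewrite (_ : #|M| - (#|M| - i) = i - o) ?letter_factor // /o; lia.
Qed.

End Window.

Lemma eta_slide w : #|M| <= size w -> eta w = slide #|M| letter_of_view w.
Proof.
move=> long_w; rewrite /eta long_w /slide /mkseq; apply/eq_in_map => i.
by rewrite mem_iota => /andP[_ lt_iw]; rewrite letter_of_view_view.
Qed.

End Construction.

Theorem lemma3 (A M : finType) (mul : M -> M -> M) (one : M)
  (mulA : associative mul) (mul1m : left_id one mul) (mulm1 : right_id one mul)
  (alpha : seq A -> M)
  (alpha_nil : alpha [::] = one)
  (alpha_cat : forall u v, alpha (u ++ v) = mul (alpha u) (alpha v)) :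
  exists eta : seq A -> seq (Bty mul alpha),
    (forall w, well_formed one (eta w) /\ alpha w = beta one (eta w)) /\
    (forall K : seq (Bty mul alpha) -> Prop,
        FO2_lt_definable K -> FO2_lt_succ_definable (fun w => K (eta w))).
Proof.
exists (eta mul one alpha); split=> [w|K [phi [s_phi [_ def_K]]]].
  split; first exact: well_formed_eta.
  by rewrite beta_eta.
apply: (definable_preimage_slide (eta_slide mulA mul1m mulm1 alpha_nil alpha_cat)).
by exists phi.
Qed.
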